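(* Let $m$ and $n$ be relatively prime positive integers. Then $S(A_m \otimes A_n) = S(A_{mn})$, where $\otimes$ denotes the Kronecker product of matrices.
   Context: For a positive integer $k$, let $\Phi_d$ denote the $d$th cyclotomic polynomial and let $\Psi_k : \mathbf{Z}[X]/(X^k-1) \to \bigoplus_{d \mid k} \mathbf{Z}[X]/(\Phi_d(X))$ be the natural map $f \bmod (X^k-1) \mapsto \bigoplus_{d\mid k} f \bmod \Phi_d(X)$. Endow $\mathbf{Z}[X]/(X^k-1)$ with the basis $(1, \overline{X}, \dots, \overline{X}^{k-1})$, each $\mathbf{Z}[X]/(\Phi_d(X))$ with the basis $(1, \overline{X}, \dots, \overline{X}^{\phi(d)-1})$, and order the summands of the direct sum by increasing $d$. $A_k$ is the $k\times k$ integer matrix of $\Psi_k$ with respect to these bases (the $j$th column is the coordinate vector of $\Psi_k(\overline{X}^{j})$). For an integer matrix $A$, $S(A)$ denotes its Smith normal form, with all elementary divisors taken non-negative. *)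

From HB Require Import structures.
From mathcomp Require Import all_boot all_order all_algebra all_field.
From mathcomp Require Import mxtens.
From Stdlib Require Import ClassicalEpsilon.
Set Implicit Arguments. Unset Strict Implicit. Unset Printing Implicit Defensive.
Import Order.TTheory GRing.Theory Num.Theory.
Local Open Scope ring_scope.

(* Row r of A_k corresponds to the coefficient of X^i in Z[X]/(Phi_d). *)
Definition row_labels (k : nat) : seq (nat * nat) :=
  flatten [seq [seq (d, i) | i <- iota 0 (totient d)] | d <- divisors k].

(* A_k: the matrix of Psi_k; column j is the coordinate vector of Psi_k(X^j),
   i.e. the coefficients of X^j mod Phi_d (reduction mod the monic 'Phi_d). *)
Definition Amat (k : nat) : 'M[int]_k :=
  \matrix_(r < k, j < k)
    let: (d, i) := nth (0%N, 0%N) (row_labels k) r in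
    (('X^j %% 'Phi_d) : {poly int})`_i.

Definition is_SNF (n : nat) (A D : 'M[int]_n) : Prop :=
  [/\ is_diag_mx D,
      (forall i : 'I_n, 0 <= D i i),
      (forall i j : 'I_n, (i <= j)%N -> (D i i %| D j j)%Z) &
      exists L R : 'M[int]_n,
        [/\ L \in unitmx, R \in unitmx & L *m A *m R = D]].

Definition SNF (n : nat) (A : 'M[int]_n) : 'M[int]_n :=
  epsilon (inhabits 0) (is_SNF A).

From mathcomp Require Import all_boot all_order all_algebra all_field.
From mathcomp Require Import mxtens fingroup perm cyclic.
From Stdlib Require Import FunctionalExtensionality PropExtensionality ClassicalEpsilon.
Set Implicit Arguments. Unset Strict Implicit. Unset Printing Implicit Defensive.
Import Order.TTheory GRing.Theory Num.Theory.
Local Open Scope ring_scope.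

(* Column t of A_k lists the coordinates of X^t in the rings Z[X]/(Φ_d), d | k.  For
   coprime m, n the Chinese remainder theorem reorders the columns of A_m ⊗ A_n so that
   column t lists the coordinates of x^t ⊗ y^t in Z[x]/(Φ_d) ⊗ Z[y]/(Φ_e), d | m, e | n.
   Since (d, e) ↦ de is a bijection onto the divisors of mn, it suffices that
   x^i ⊗ y^j ↦ X^(ai + bj), with a, b the CRT idempotents of Z/de, is an isomorphism
   Z[x]/(Φ_d) ⊗ Z[y]/(Φ_e) ≅ Z[X]/(Φ_de) with inverse X ↦ x ⊗ y.  Both identities are
   checked at a primitive de-th root of unity η, where η^a and η^b are primitive d-th and
   e-th roots, since an integer polynomial of degree < φ(de) vanishing at η is zero. *)

Lemma is_SNF_equiv k (A D L R : 'M[int]_k) : L \in unitmx -> R \in unitmx ->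
  is_SNF A D -> is_SNF (L *m A *m R) D.
Proof.
move=> uL uR [diagD posD dvdD [L' [R' [uL' uR' defD]]]]; split=> //.
exists (L' *m invmx L), (invmx R *m R'); split.
- by rewrite unitmx_mul uL' unitmx_inv uL.
- by rewrite unitmx_mul uR' unitmx_inv uR.
rewrite -defD !mulmxA -(mulmxA L') mulVmx // mulmx1.
by rewrite -(mulmxA _ R) mulmxV // mulmx1.
Qed.

Lemma SNF_equiv k (A L R : 'M[int]_k) : L \in unitmx -> R \in unitmx ->
  SNF (L *m A *m R) = SNF A.
Proof.
move=> uL uR; rewrite /SNF; congr (epsilon _ _).
apply: functional_extensionality => D; apply: propositional_extensionality.
split; last exact: is_SNF_equiv.
have uL' : invmx L \in unitmx by rewrite unitmx_inv.
have uR' : invmx R \in unitmx by rewrite unitmx_inv.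
move/(is_SNF_equiv uL' uR').
by rewrite !mulmxA mulVmx // mul1mx -mulmxA mulmxV // mulmx1.
Qed.

Local Notation toC := (map_poly (intr : int -> algC)).

Lemma size_modPhi (D : nat) (p : {poly int}) : (size (p %% 'Phi_D)%R <= totient D)%N.
Proof.
by rewrite -ltnS -(size_Cyclotomic D) ltn_modpN0 // monic_neq0 // Cyclotomic_monic.
Qed.

Section PrimitiveRoot.
Variables (D : nat) (eta : algC).
Hypothesis prim_eta : D.-primitive_root eta.

Lemma horner_toC_modPhi (p : {poly int}) : (toC (p %% 'Phi_D)).[eta] = (toC p).[eta].
Proof.
have Phi_eta : (toC 'Phi_D).[eta] = 0.
  by rewrite (Cintr_Cyclotomic prim_eta); apply/eqP; rewrite -/(root _ _) root_cyclotomic.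
rewrite {2}(Pdiv.IdomainMonic.divp_eq (Cyclotomic_monic D) p).
by rewrite rmorphD rmorphM /= hornerD hornerM Phi_eta mulr0 add0r.
Qed.

Lemma horner_toC_XnmodPhi t : (toC ('X^t %% 'Phi_D)).[eta] = eta ^+ t.
Proof. by rewrite horner_toC_modPhi map_polyXn hornerXn. Qed.

(* The minimal polynomial of [eta] over Q is [Phi_D], of degree [totient D]. *)
Lemma toC_prim_root_eq0 (q : {poly int}) :
  (size q <= totient D)%N -> (toC q).[eta] = 0 -> q = 0.
Proof.
move=> le_q_D q_eta; have [p [defp _] dv_p] := minCpolyP eta.
have toQ_C : map_poly ratr (map_poly (intr : int -> rat) q) = toC q.
  by rewrite -map_poly_comp; apply: eq_map_poly => b /=; rewrite rmorph_int.
have p_dv_q : (p %| map_poly (intr : int -> rat) q)%R by rewrite -dv_p toQ_C /root q_eta.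
have size_p : size p = (totient D).+1.
  rewrite -(size_map_inj_poly (@fmorph_inj _ _ (ratr : {rmorphism rat -> algC}))) ?rmorph0 //.
  by rewrite -defp (minCpoly_cyclotomic prim_eta) size_cyclotomic.
apply/eqP; apply: contraTT le_q_D => q_neq0.
have qQ_neq0 : map_poly (intr : int -> rat) q != 0.
  by rewrite map_poly_eq0_id0 ?intr_eq0 ?lead_coef_eq0.
move: (dvdp_leq qQ_neq0 p_dv_q); rewrite size_p size_map_inj_poly //; last exact: intr_inj.
by rewrite -ltnNge.
Qed.

Lemma toC_prim_root_inj (p q : {poly int}) :
  (size p <= totient D)%N -> (size q <= totient D)%N ->
  (toC p).[eta] = (toC q).[eta] -> p = q.
Proof.
move=> le_p_D le_q_D pq_eta; apply/eqP; rewrite -subr_eq0; apply/eqP.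
apply: toC_prim_root_eq0; last by rewrite rmorphB /= hornerD hornerN pq_eta subrr.
by rewrite (leq_trans (size_polyD _ _)) // geq_max size_polyN le_p_D.
Qed.

End PrimitiveRoot.

Lemma XnmodPhi_modn d k t : (0 < k)%N -> (d %| k)%N ->
  'X^(t %% k) %% 'Phi_d = 'X^t %% 'Phi_d :> {poly int}.
Proof.
move=> k_gt0 dv_dk; have [eta prim_eta] := C_prim_root_exists (dvdn_gt0 k_gt0 dv_dk).
apply: (toC_prim_root_inj prim_eta); rewrite ?size_modPhi //.
by rewrite !(horner_toC_XnmodPhi prim_eta) -(prim_expr_mod prim_eta) modn_dvdm // prim_expr_mod.
Qed.

Lemma prim_root_expr_coprime d e (eta : algC) a : (d * e).-primitive_root eta ->
  (e %| a)%N -> coprime a d -> d.-primitive_root (eta ^+ a).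
Proof.
move=> prim_eta dv_ea co_ad.
have /andP[d_gt0 e_gt0] : (0 < d)%N && (0 < e)%N by rewrite -muln_gt0 (prim_order_gt0 prim_eta).
have prim_eta_e : d.-primitive_root (eta ^+ e).
  by have := dvdn_prim_root prim_eta (dvdn_mulr e (dvdnn d)); rewrite mulKn.
rewrite -(divnK dv_ea) mulnC exprM prim_root_exp_coprime //.
by move: co_ad; rewrite -{1}(divnK dv_ea) coprimeMl => /andP[].
Qed.

Definition crt_exp d e (i j : nat) : nat := chinese d e 1 0 * i + chinese d e 0 1 * j.

Lemma crt_exp_diag d e t : coprime d e -> crt_exp d e t t = t %[mod d * e].
Proof.
move=> co_de; rewrite /crt_exp -mulnDl -modnMml.
suff -> : ((chinese d e 1 0 + chinese d e 0 1) %% (d * e) = 1 %% (d * e))%N.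
  by rewrite modnMml mul1n.
apply/eqP; rewrite chinese_remainder //; apply/andP; split; apply/eqP.
  by rewrite -modnDm !chinese_modl // modnDm addn0.
by rewrite -modnDm !chinese_modr // modnDm.
Qed.

Lemma XnmodPhiM d e t : (0 < d)%N -> (0 < e)%N -> coprime d e ->
  \sum_(i < totient d) \sum_(j < totient e)
     ((('X^t %% 'Phi_d)`_i * ('X^t %% 'Phi_e)`_j) *: ('X^(crt_exp d e i j) %% 'Phi_(d * e)))
  = 'X^t %% 'Phi_(d * e) :> {poly int}.
Proof.
move=> d_gt0 e_gt0 co_de.
have de_gt0 : (0 < d * e)%N by rewrite muln_gt0 d_gt0.
have [eta prim_eta] := C_prim_root_exists de_gt0.
have prim_a : d.-primitive_root (eta ^+ chinese d e 1 0).
  apply: (prim_root_expr_coprime prim_eta); first by rewrite /dvdn chinese_modr // mod0n.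
  by rewrite -coprime_modl chinese_modl // coprime_modl coprime1n.
have prim_b : e.-primitive_root (eta ^+ chinese d e 0 1).
  rewrite mulnC in prim_eta; apply: (prim_root_expr_coprime prim_eta).
    by rewrite /dvdn chinese_modl // mod0n.
  by rewrite -coprime_modl chinese_modr // coprime_modl coprime1n.
have sum_coef k (x : algC) t' : k.-primitive_root x ->
    \sum_(i < totient k) (('X^t' %% 'Phi_k)`_i)%:~R * x ^+ i = x ^+ t'.
  move=> prim_x; rewrite -(horner_toC_XnmodPhi prim_x) (@horner_coef_wide _ (totient k)).
    by apply: eq_bigr => i _; rewrite coef_map.
  by rewrite size_map_inj_poly ?size_modPhi //; exact: intr_inj.
have split_t : eta ^+ t = (eta ^+ chinese d e 1 0) ^+ t * (eta ^+ chinese d e 0 1) ^+ t.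
  rewrite -!exprM -exprD -[(_ + _)%N]/(crt_exp d e t t).
  by rewrite -(prim_expr_mod prim_eta) -(crt_exp_diag t co_de) prim_expr_mod.
apply: (toC_prim_root_inj prim_eta); rewrite ?size_modPhi //.
  rewrite (leq_trans (size_sum _ _ _)) //; apply/bigmax_leqP => i _.
  rewrite (leq_trans (size_sum _ _ _)) //; apply/bigmax_leqP => j _.
  by rewrite (leq_trans (size_scale_leq _ _)) // size_modPhi.
rewrite (horner_toC_XnmodPhi prim_eta) split_t.
rewrite -(sum_coef _ _ _ prim_a) -(sum_coef _ _ _ prim_b) mulr_suml.
rewrite rmorph_sum horner_sum; apply: eq_bigr => i _.
rewrite rmorph_sum horner_sum mulr_sumr; apply: eq_bigr => j _.
rewrite /= map_polyZ hornerZ (horner_toC_XnmodPhi prim_eta) rmorphM /= /crt_exp.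
by rewrite exprD !exprM mulrACA.
Qed.

Lemma sum_totient_divisors k : (0 < k)%N -> (\sum_(d <- divisors k) totient d)%N = k.
Proof.
move=> k_gt0; rewrite -{2}(sum_totient_dvd k) -(big_mkord (fun d => d %| k)%N).
rewrite -[in RHS]big_filter; apply: perm_big; apply: uniq_perm.
- exact: divisors_uniq.
- by rewrite filter_uniq // iota_uniq.
move=> d; rewrite mem_filter mem_iota -dvdn_divisors // add0n ltnS.
by case dv_dk: (d %| k)%N => //=; rewrite dvdn_leq.
Qed.

Lemma size_row_labels k : (0 < k)%N -> size (row_labels k) = k.
Proof.
move=> k_gt0; rewrite size_allpairs_dep sumnE big_map -{2}(sum_totient_divisors k_gt0).
by apply: eq_bigr => d _; rewrite size_iota.
Qed.

Lemma uniq_row_labels k : uniq (row_labels k).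
Proof.
apply: allpairs_uniq_dep => [|d _|[d1 i1] [d2 i2] _ _ [-> ->]] //.
- exact: divisors_uniq.
- exact: iota_uniq.
Qed.

Lemma big_row_labels (R : nmodType) k (F : nat * nat -> R) :
  \sum_(x <- row_labels k) F x = \sum_(d <- divisors k) \sum_(i < totient d) F (d, val i).
Proof.
rewrite big_flatten big_map; apply: eq_bigr => d _.
by rewrite big_map -(big_mkord xpredT (fun i => F (d, i))) /index_iota subn0.
Qed.

Definition row_label k (r : nat) : nat * nat := nth (0, 0)%N (row_labels k) r.

Definition coordXn t (x : nat * nat) : int := ('X^t %% 'Phi_x.1)`_x.2.

Lemma AmatE k r j : Amat k r j = coordXn j (row_label k r).
Proof. by rewrite mxE /row_label /coordXn; case: nth. Qed.

Lemma eq_row_label k (r1 r2 : 'I_k) : (row_label k r1 == row_label k r2) = (r1 == r2).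
Proof.
by case: k r1 r2 => [[]//|k] r1 r2; rewrite nth_uniq ?size_row_labels ?uniq_row_labels.
Qed.

Lemma row_labelP k (r : 'I_k) :
  ((row_label k r).1 %| k)%N && ((row_label k r).2 < totient (row_label k r).1)%N.
Proof.
case: k r => [[]//|k] r; rewrite dvdn_divisors //.
have /allpairsPdep[d [i [dv_d]]] : row_label k.+1 r \in row_labels k.+1.
  by rewrite mem_nth // size_row_labels.
by rewrite mem_iota add0n => /andP[_ lt_i] ->; rewrite /= dv_d.
Qed.

Lemma big_ord_row_labels (R : nmodType) k (F : nat * nat -> R) : (0 < k)%N ->
  \sum_(r < k) F (row_label k r) = \sum_(d <- divisors k) \sum_(i < totient d) F (d, val i).
Proof.
by move=> k_gt0; rewrite -big_row_labels (big_nth (0, 0)%N) size_row_labels // big_mkord.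
Qed.

Lemma big_mxtens_unindex (R : nmodType) m n (F : 'I_m -> 'I_n -> R) :
  \sum_(s < m * n) F (mxtens_unindex s).1 (mxtens_unindex s).2 =
  \sum_(i < m) \sum_(j < n) F i j.
Proof.
rewrite pair_big /=; symmetry; apply: (reindex (@mxtens_unindex m n)).
by exists (@mxtens_index m n) => s _; rewrite (mxtens_indexK, mxtens_unindexK).
Qed.

Section CoprimeDivisors.
Variables m n : nat.
Hypotheses (m_gt0 : (0 < m)%N) (n_gt0 : (0 < n)%N) (co_mn : coprime m n).

Lemma coprime_gcd_divisors D : coprime (gcdn D m) (gcdn D n).
Proof. by apply: (coprime_dvdl (dvdn_gcdr _ _)); apply: (coprime_dvdr (dvdn_gcdr _ _)). Qed.

Lemma dvdn_mul_gcd D : (D %| m * n)%N -> D = (gcdn D m * gcdn D n)%N.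
Proof.
move=> dv_Dmn; apply/eqP; rewrite eqn_dvd; apply/andP; split.
  rewrite muln_gcdl !muln_gcdr !dvdn_gcd dv_Dmn.
  by rewrite !(dvdn_mulr _ (dvdnn D)) (dvdn_mull _ (dvdnn D)).
by rewrite Gauss_dvd ?dvdn_gcdl ?coprime_gcd_divisors.
Qed.

Lemma eqn_mul_divisors D d e : (D %| m * n)%N -> (d %| m)%N -> (e %| n)%N ->
  (D == d * e)%N = (d == gcdn D m) && (e == gcdn D n).
Proof.
move=> dv_Dmn dv_dm dv_en; apply/eqP/andP => [->|[/eqP-> /eqP->]]; last first.
  exact: dvdn_mul_gcd.
split; apply/eqP; rewrite gcdnC.
  by rewrite Gauss_gcdl ?(gcdn_idPr dv_dm) // (coprime_dvdr dv_en).
by rewrite Gauss_gcdr ?(gcdn_idPr dv_en) // coprime_sym (coprime_dvdl dv_dm).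
Qed.

Lemma big_divisors_mul (R : nmodType) D (G : nat -> nat -> R) : (D %| m * n)%N ->
  \sum_(d <- divisors m) \sum_(e <- divisors n) (if D == (d * e)%N then G d e else 0)
  = G (gcdn D m) (gcdn D n).
Proof.
move=> dv_Dmn.
have pick_divisor k d0 (H : nat -> R) : (d0 %| k)%N -> (0 < k)%N ->
    \sum_(d <- divisors k) (if d == d0 then H d else 0) = H d0.
  move=> dv_d0 k_gt0; rewrite (bigD1_seq d0) ?divisors_uniq -?dvdn_divisors //=.
  by rewrite eqxx big1 ?addr0 // => d /negbTE ->.
transitivity (\sum_(d <- divisors m) (if d == gcdn D m then
   \sum_(e <- divisors n) (if e == gcdn D n then G d e else 0) else 0)).
  apply: eq_big_seq => d; rewrite -dvdn_divisors // => dv_dm.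
  case: eqP => [-> | ne_d].
    apply: eq_big_seq => e; rewrite -dvdn_divisors // => dv_en.
    by rewrite eqn_mul_divisors ?dvdn_gcdr // eqxx.
  apply: big1_seq => e; rewrite -dvdn_divisors // => dv_en.
  by rewrite eqn_mul_divisors // (introF eqP ne_d).
by rewrite !pick_divisor ?dvdn_gcdr.
Qed.

End CoprimeDivisors.

Section CRTMatrix.
Variables m n : nat.
Hypotheses (m_gt0 : (0 < m)%N) (n_gt0 : (0 < n)%N) (co_mn : coprime m n).

Local Notation label := (row_label (m * n)).
Local Notation labell s := (row_label m (@mxtens_unindex m n s).1).
Local Notation labelr s := (row_label n (@mxtens_unindex m n s).2).

(* Entry ((D, k), ((d, i), (e, j))) of [crt_mx] is the X^k-coordinate of X^(ai + bj) in
   Z[X]/(Φ_D) when D = de, and 0 otherwise; [crt_mx_inv] is the matrix of X ↦ x ⊗ y. *)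
Definition crt_mx : 'M[int]_(m * n) := \matrix_(r, s)
  let: (x, y) := (labell s, labelr s) in
  if (label r).1 == (x.1 * y.1)%N then coordXn (crt_exp x.1 y.1 x.2 y.2) (label r) else 0.

Definition crt_mx_inv : 'M[int]_(m * n) := \matrix_(s, r)
  let: (x, y) := (labell s, labelr s) in
  if (label r).1 == (x.1 * y.1)%N then coordXn (label r).2 x * coordXn (label r).2 y else 0.

Lemma crt_mx_sum (r : 'I_(m * n)) (W : nat * nat -> nat * nat -> int) :
  let d := gcdn (label r).1 m in let e := gcdn (label r).1 n in
  \sum_s crt_mx r s * W (labell s) (labelr s) =
  \sum_(i < totient d) \sum_(j < totient e)
    coordXn (crt_exp d e i j) (label r) * W (d, val i) (e, val j).
Proof.
move=> d e; have /andP[dv_Dmn _] := row_labelP r.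
pose H x y := (if (label r).1 == (x.1 * y.1)%N then
  coordXn (crt_exp x.1 y.1 x.2 y.2) (label r) else 0) * W x y.
transitivity (\sum_(s1 < m) \sum_(s2 < n) H (row_label m s1) (row_label n s2)).
  rewrite -(big_mxtens_unindex (fun s1 s2 => H (row_label m s1) (row_label n s2))).
  by apply: eq_bigr => s _; rewrite mxE.
rewrite (big_ord_row_labels (fun x => \sum_(s2 < n) H x (row_label n s2))) //.
under eq_bigr => d' _ do
  under eq_bigr => i _ do rewrite (big_ord_row_labels (H (d', val i))) //.
pose G d' e' := \sum_(i < totient d') \sum_(j < totient e')
  coordXn (crt_exp d' e' i j) (label r) * W (d', val i) (e', val j).
apply: etrans (big_divisors_mul m_gt0 n_gt0 co_mn G dv_Dmn); apply: eq_bigr => d' _.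
rewrite exchange_big; apply: eq_bigr => e' _; rewrite /H /=.
case: ifP => _ //; rewrite big1 // => i _; rewrite big1 // => j _; exact: mul0r.
Qed.

Lemma crt_mx_sum_coordXn (r : 'I_(m * n)) t :
  let d := gcdn (label r).1 m in let e := gcdn (label r).1 n in
  \sum_(i < totient d) \sum_(j < totient e)
    coordXn (crt_exp d e i j) (label r) * (coordXn t (d, val i) * coordXn t (e, val j)) =
  coordXn t (label r).
Proof.
move=> d e; have /andP[dv_Dmn _] := row_labelP r.
have d_gt0 : (0 < d)%N by rewrite gcdn_gt0 m_gt0 orbT.
have e_gt0 : (0 < e)%N by rewrite gcdn_gt0 n_gt0 orbT.
have := congr1 (fun p : {poly int} => p`_(label r).2)
  (XnmodPhiM t d_gt0 e_gt0 (coprime_gcd_divisors co_mn _)).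
rewrite -(dvdn_mul_gcd co_mn) // => defXt.
rewrite /coordXn -defXt coef_sum; apply: eq_bigr => i _.
by rewrite coef_sum; apply: eq_bigr => j _; rewrite coefZ mulrC.
Qed.

Lemma crt_mx_mul_inv : crt_mx *m crt_mx_inv = 1%:M.
Proof.
apply/matrixP => r r'; rewrite !mxE.
pose W x y := if (label r').1 == (x.1 * y.1)%N then
  coordXn (label r').2 x * coordXn (label r').2 y else 0.
rewrite (eq_bigr (fun s => crt_mx r s * W (labell s) (labelr s))); last first.
  by move=> s _; rewrite [crt_mx_inv _ _]mxE.
rewrite crt_mx_sum /W /= -(dvdn_mul_gcd co_mn); last by case/andP: (row_labelP r).
have [eq_D | ne_D] := eqVneq (label r').1 (label r).1; last first.
  rewrite big1 => [|i _]; last by rewrite big1 // => j _; rewrite mulr0.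
  have ne_label : label r != label r' by apply: contraNneq ne_D => ->.
  by rewrite -eq_row_label (negbTE ne_label).
have /andP[_ lt_k'] := row_labelP r'.
rewrite crt_mx_sum_coordXn -eq_row_label /coordXn.
move: eq_D lt_k'; case: (label r) => D k; case: (label r') => D' k' /= -> lt_k'.
rewrite modp_small ?coefXn ?xpair_eqE ?eqxx //.
by rewrite size_polyXn size_Cyclotomic ltnS.
Qed.

Definition crt_index (t : 'I_(m * n)) : 'I_(m * n) :=
  mxtens_index (Ordinal (ltn_pmod t m_gt0), Ordinal (ltn_pmod t n_gt0)).

Lemma crt_index_inj : injective crt_index.
Proof.
move=> t1 t2 /(congr1 (@mxtens_unindex m n)); rewrite !mxtens_indexK => -[eq_m eq_n].
apply: val_inj; have : (t1 == t2 %[mod m * n])%N by rewrite chinese_remainder // eq_m eq_n !eqxx.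
by rewrite !modn_small // => /eqP.
Qed.

Definition crt_perm : 'S_(m * n) := perm crt_index_inj.

Lemma crt_mx_tens : crt_mx *m col_perm crt_perm (Amat m *t Amat n) = Amat (m * n).
Proof.
apply/matrixP => r t; rewrite AmatE mxE.
pose W x y := coordXn t x * coordXn t y.
rewrite (eq_bigr (fun s => crt_mx r s * W (labell s) (labelr s))); last first.
  move=> s _; congr (_ * _); rewrite mxE /crt_perm permE /crt_index mxE mxtens_indexK /=.
  have /andP[dv_m _] := row_labelP (@mxtens_unindex m n s).1.
  have /andP[dv_n _] := row_labelP (@mxtens_unindex m n s).2.
  by rewrite !AmatE /coordXn (XnmodPhi_modn _ m_gt0 dv_m) (XnmodPhi_modn _ n_gt0 dv_n).
by rewrite crt_mx_sum crt_mx_sum_coordXn.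
Qed.

End CRTMatrix.

Theorem theorem2p4 (m n : nat) :
  (0 < m)%N -> (0 < n)%N -> coprime m n ->
  SNF (Amat m *t Amat n) = SNF (Amat (m * n)).
Proof.
move=> m_gt0 n_gt0 co_mn.
have [crt_unit _] := mulmx1_unit (crt_mx_mul_inv m_gt0 n_gt0 co_mn).
have perm_unit := @unitmx_perm int _ (crt_perm m_gt0 n_gt0 co_mn)^-1%g.
by rewrite -(crt_mx_tens m_gt0 n_gt0 co_mn) col_permE mulmxA SNF_equiv.
Qed.
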